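(* Let $b$ be the linear endomorphism of $\mathbf{WQSym}$ defined by $b(\mathbf M_u)=\mathbf M_{1\cdot u[1]}$, where $\cdot$ is concatenation and $u[1]$ is $u$ with every letter increased by $1$. For a plane forest $\overline{\mathcal F}$, let $B_+(\overline{\mathcal F})$ be the plane tree obtained by attaching the trees of $\overline{\mathcal F}$, in order, as children of a new common root. Then for every plane forest $\overline{\mathcal F}$, $$\pi\big(S'^{\iota(B_+(\overline{\mathcal F}))}\big)=b\big(\pi(S'^{\iota(\overline{\mathcal F})})\big).$$
   Context: A plane forest is a finite sequence of plane trees (rooted trees whose children are linearly ordered). For a plane forest with $n$ vertices, $\iota$ gives the rooted forest on vertex set $[n]$ obtained by numbering the vertices in order of first visit in a left depth-first traversal (trees from left to right). For a rooted forest $\mathcal F$ on $[n]$, over $A'=\{a_{ij}:1\le i\le j\}$ with $a_{hi}\prec a_{ij}$ for $h\le i<j$, $S'^{\mathcal F}$ is the sum of all words $w_1\cdots w_n$ with $w_k$ a diagonal letter $a_{ii}$ for each root $k$ and $w_k\prec w_l$ whenever $k$ is the parent of $l$. $\pi$ is the algebra morphism $a_{ij}\mapsto x_j$ into noncommutative series over $X=\{x_1<x_2<\cdots\}$ (identify $x_i$ with $i$). A packed word is a word over positive integers whose letter set is $\{1,\dots,m\}$; $\mathrm{pack}(w)$ replaces the $r$-th smallest letter by $r$; $\mathbf M_u=\sum_{\mathrm{pack}(w)=u}w$; $\mathbf{WQSym}$ is the span of the $\mathbf M_u$. *)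

From mathcomp Require Import all_boot.
Set Implicit Arguments. Unset Strict Implicit. Unset Printing Implicit Defensive.

Inductive ptree : Type := Node of seq ptree.
Definition pforest := seq ptree.

Definition Bplus (F : pforest) : ptree := Node F.

(* ---------- Rooted forests on [n] ----------
   A rooted forest on [n] = {1,...,n} is encoded by its parent list
   p : seq (option nat) of size n: the entry of index k-1 is the parent of
   vertex k (Some j, with j in [n]), or None if k is a root. *)
Definition rforest := seq (option nat).

(* iota: number the vertices in order of first visit of a left depth-first
   traversal.  [itree t par nx] numbers the root of t by nx (its parent being
   par) and the rest of t by nx+1, nx+2, ...; it returns the parent list of
   the vertices nx, nx+1, ... of t. *)
Fixpoint itree (t : ptree) (par : option nat) (nx : nat) {struct t}
  : seq (option nat) :=
  match t with
  | Node ts =>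
      par :: (fix iforest (ts : seq ptree) (m : nat) : seq (option nat) :=
                match ts with
                | [::] => [::]
                | t' :: ts' =>
                    let l := itree t' (Some nx) m in l ++ iforest ts' (m + size l)
                end) ts nx.+1
  end.

Fixpoint iforest_from (F : pforest) (m : nat) : seq (option nat) :=
  match F with
  | [::] => [::]
  | t :: F' => let l := itree t None m in l ++ iforest_from F' (m + size l)
  end.

Definition iota_pf (F : pforest) : rforest := iforest_from F 1.

(* ---------- Series ----------
   Letters a_ij of A' are pairs (i, j); a_ij belongs to A' iff 1 <= i <= j.
   Letters x_i of X are identified with positive integers i. *)
Definition letterA := (nat * nat)%type.
Definition inA' (a : letterA) : bool := (0 < a.1) && (a.1 <= a.2).
Definition seriesA := seq letterA -> nat.
Definition seriesX := seq nat -> nat.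

Definition precA (a b : letterA) : bool :=
  [&& a.1 <= a.2, a.2 == b.1 & b.1 < b.2].

Definition diagA (a : letterA) : bool := a.1 == a.2.

Definition Sprime (p : rforest) : seriesA := fun w =>
  nat_of_bool
    [&& size w == size p, all inA' w &
        all (fun k => match nth None p k with
                      | None => diagA (nth (0, 0) w k)
                      | Some q => precA (nth (0, 0) w q.-1) (nth (0, 0) w k)
                      end) (iota 0 (size p))].

(* pi : a_ij |-> x_j, extended to series: the coefficient of a word v over X
   in pi(S) is the (finite) sum of the coefficients in S of the words over A'
   mapped to v.  [preim v] enumerates those words. *)
Fixpoint preim (v : seq nat) : seq (seq letterA) :=
  match v with
  | [::] => [:: [::]]
  | j :: v' => [seq (i, j) :: w | i <- iota 1 j, w <- preim v']
  end.

Definition piS (S : seriesA) : seriesX := fun v => \sum_(w <- preim v) S w.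

Definition packed (u : seq nat) : bool :=
  sort leq (undup u) == iota 1 (size (undup u)).

Definition pack (w : seq nat) : seq nat :=
  [seq (index x (sort leq (undup w))).+1 | x <- w].

Definition M (u : seq nat) : seriesX := fun w =>
  nat_of_bool ((0 \notin w) && (pack w == u)).

Definition lin_comb (s : seq (seq nat * nat)) : seriesX := fun w =>
  \sum_(x <- s) x.2 * M x.1 w.

Definition in_WQSym (f : seriesX) : Prop :=
  exists s : seq (seq nat * nat), all packed (unzip1 s) /\ f =1 lin_comb s.

(* b(M_u) = M_{1 . u[1]}, extended linearly: image of a combination *)
Definition b_comb (s : seq (seq nat * nat)) : seq (seq nat * nat) :=
  [seq (1 :: map succn x.1, x.2) | x <- s].

(* Labelling the vertices of iota(F) by the second indices of a word of
   S'^{iota(F)} gives a labelling by positive integers that strictly increases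
   from each vertex to its children; conversely, for such a labelling v the
   first indices are forced (a root letter is a_{v_k v_k}, a child letter is
   a_{v_parent v_k}).  Hence pi(S'^{iota(F)}) is the characteristic series of
   these "heap words".  Being a heap word only depends on the relative order of
   the letters, so this series is a sum of M_u over packed heap words u.
   Grafting under a new root numbers the new root 1 and shifts all other
   vertices by one; a heap word of B_+(F) is thus x.v with v a heap word of F
   all of whose letters exceed x > 0, which is exactly the support of
   M_{1.u[1]} restricted to words x.v with pack(v) = u. *)

From Pilot Require Import Defs.
From mathcomp Require Import all_boot.
From Stdlib Require List.
Set Implicit Arguments. Unset Strict Implicit. Unset Printing Implicit Defensive.

Lemma sum_eq_and (T : eqType) (s : seq T) c (P : pred T) : uniq s ->
  \sum_(i <- s) ((c == i) && P i) = (c \in s) && P c.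
Proof.
elim: s => [|a s IH]; rewrite ?big_nil // big_cons inE /= => /andP[a_notin_s /IH->].
by case: eqVneq => [->|//]; rewrite (negbTE a_notin_s) addn0.
Qed.

Lemma nat_of_all (T : Type) (P : pred T) s :
  nat_of_bool (all P s) = \prod_(k <- s) nat_of_bool (P k).
Proof.
by elim: s => [|a s IH]; rewrite ?big_nil ?big_cons //= -IH; case: (P a); case: all.
Qed.

Definition ptree_ind_all (P : ptree -> Prop)
    (IH : forall ts, List.Forall P ts -> P (Node ts)) : forall t, P t :=
  fix f t := let: Node ts := t in
    IH ts ((fix g ts : List.Forall P ts :=
              if ts is t' :: ts' then List.Forall_cons t' (f t') (g ts')
              else List.Forall_nil P) ts).

Fixpoint iforest_at (par : option nat) (ts : pforest) (m : nat) : seq (option nat) :=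
  if ts is t :: ts' then let l := itree t par m in l ++ iforest_at par ts' (m + size l)
  else [::].

Lemma itree_Node ts par nx :
  itree (Node ts) par nx = par :: iforest_at (Some nx) ts nx.+1.
Proof. by rewrite /=; congr (_ :: _); elim: ts nx.+1 => //= t ts IH m; rewrite IH. Qed.

Lemma iforest_fromE F m : iforest_from F m = iforest_at None F m.
Proof. by elim: F m => //= t F IH m; rewrite IH. Qed.

(* Vertices are numbered from 1, so [Some q] points to position [q.-1]; writing
   the new parent as [(q.-1).+2] keeps the shift exact on positions even for the
   meaningless parent [Some 0]. *)
Definition shift_parent (o : option nat) : option nat :=
  if o is Some q then Some (q.-1).+2 else Some 1.

Lemma iforest_at_shift ts par m : 0 < m ->
  List.Forall (fun t => forall par nx, 0 < nx ->
    itree t (shift_parent par) nx.+1 = map shift_parent (itree t par nx)) ts ->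
  iforest_at (shift_parent par) ts m.+1 = map shift_parent (iforest_at par ts m).
Proof.
elim: ts m => //= t ts IH m m_gt0 /List.Forall_cons_iff[Ht Hts].
by rewrite Ht // map_cat size_map addSn IH // addn_gt0 m_gt0.
Qed.

Lemma itree_shift t par nx : 0 < nx ->
  itree t (shift_parent par) nx.+1 = map shift_parent (itree t par nx).
Proof.
move: par nx; elim/ptree_ind_all: t => ts IH par nx nx_gt0.
rewrite !itree_Node /=; congr (_ :: _).
have -> : Some nx.+1 = shift_parent (Some nx) by rewrite /= prednK.
exact: iforest_at_shift.
Qed.

Lemma iota_Bplus F : iota_pf [:: Bplus F] = None :: map shift_parent (iota_pf F).
Proof.
have -> : iota_pf [:: Bplus F] = itree (Node F) None 1 by rewrite /iota_pf /= cats0.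
rewrite itree_Node /iota_pf iforest_fromE; congr (_ :: _).
apply: (iforest_at_shift None) => //; apply/List.Forall_forall => t _ par nx.
exact: itree_shift.
Qed.

(* Positions [k] are 0-based while parents in [p] are 1-based; [r] is a strict
   lower bound for the labels of the roots. *)
Definition heap_at (r : nat) (p : rforest) (v : seq nat) (k : nat) : bool :=
  if nth None p k is Some q then 0 < nth 0 v q.-1 < nth 0 v k else r < nth 0 v k.

Definition heap_word (r : nat) (p : rforest) (v : seq nat) : bool :=
  (size v == size p) && all (heap_at r p v) (iota 0 (size v)).

(* The first indices [i] allowed for the letter a_{i, v_k} at position [k] of a
   word of S'^p whose second indices spell [v]. *)
Definition first_index_ok (p : rforest) (v : seq nat) (k i : nat) : bool :=
  if nth None p k is Some q then (nth 0 v q.-1 == i) && (i < nth 0 v k)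
  else i == nth 0 v k.

Lemma mem_preim v w : w \in Defs.preim v -> unzip2 w = v /\ all inA' w.
Proof.
elim: v w => [|j v IH] w /=; first by rewrite inE => /eqP ->.
case/allpairsP => -[i w'] [/= i_le_j /IH[w'2 w'_inA] ->] /=.
by rewrite w'2 w'_inA andbT /inA' /=; move: i_le_j; rewrite mem_iota add1n ltnS => ->.
Qed.

Lemma nth_unzip2 (w : seq letterA) k : (nth (0, 0) w k).2 = nth 0 (unzip2 w) k.
Proof. by elim: w k => [|a w IH] [|k] //=. Qed.

Lemma nth_inA' (w : seq letterA) k :
  all inA' w -> (nth (0, 0) w k).1 <= (nth (0, 0) w k).2.
Proof.
by elim: w k => [|a w IH] [|k] //= /andP[/andP[_ a12] w_inA]; [apply: a12 | apply: IH].
Qed.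

Lemma sum_preim (g : nat -> nat -> nat) v :
  \sum_(w <- Defs.preim v) \prod_(k <- iota 0 (size v)) g k (nth (0, 0) w k).1 =
  \prod_(k <- iota 0 (size v)) \sum_(i <- iota 1 (nth 0 v k)) g k i.
Proof.
elim: v g => [|j v IH] g /=; first by rewrite !big_cons !big_nil.
have -> : iota 1 (size v) = map succn (iota 0 (size v)) by rewrite -(iotaDl 1).
rewrite big_allpairs_dep /= big_cons big_map big_distrl /=.
apply: eq_bigr => i _; rewrite -(IH (fun k => g k.+1)) big_distrr /=.
by apply: eq_bigr => w _; rewrite big_cons big_map.
Qed.

Lemma Sprime_preim p v w : w \in Defs.preim v ->
  Sprime p w = (size v == size p) *
               \prod_(k <- iota 0 (size v)) first_index_ok p v k (nth (0, 0) w k).1.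
Proof.
case/mem_preim => w2 w_inA.
have size_w : size w = size v by rewrite -w2 size_map.
rewrite /Sprime size_w w_inA /=; case: eqP => [<-|_]; last by rewrite mul0n.
rewrite mul1n nat_of_all; apply: eq_bigr => k _.
rewrite /first_index_ok /diagA nth_unzip2 w2.
case: (nth None p k) => // q; rewrite /precA nth_inA' //= !nth_unzip2 w2.
by case: eqP => // <-.
Qed.

Lemma sum_first_index p v k :
  \sum_(i <- iota 1 (nth 0 v k)) first_index_ok p v k i = heap_at 0 p v k.
Proof.
rewrite /first_index_ok /heap_at; case: (nth None p k) => [q|].
  rewrite sum_eq_and ?iota_uniq // mem_iota add1n ltnS.
  congr nat_of_bool; apply/andP/andP => [[/andP[-> _] ->] | [-> lt_qk]] //.
  by split=> //; apply: ltnW.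
rewrite (eq_bigr (fun i => nat_of_bool ((nth 0 v k == i) && true))) => [|i _]; last first.
  by rewrite andbT eq_sym.
by rewrite sum_eq_and ?iota_uniq // mem_iota add1n ltnSn !andbT.
Qed.

Lemma piS_Sprime p v : piS (Sprime p) v = heap_word 0 p v.
Proof.
rewrite /piS (eq_big_seq _ (@Sprime_preim p v)) -big_distrr /=.
rewrite (sum_preim (fun k i => nat_of_bool (first_index_ok p v k i))) /heap_word.
case: eqP => _; rewrite ?mul0n // mul1n nat_of_all.
by apply: eq_bigr => k _; rewrite sum_first_index.
Qed.

Definition sorted_letters (w : seq nat) : seq nat := sort leq (undup w).

Lemma packE w : pack w = [seq (index x (sorted_letters w)).+1 | x <- w].
Proof. by []. Qed.

Lemma mem_sorted_letters w x : (x \in sorted_letters w) = (x \in w).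
Proof. by rewrite mem_sort mem_undup. Qed.

Lemma sorted_letters_ltn w : sorted ltn (sorted_letters w).
Proof.
by rewrite ltn_sorted_uniq_leq sort_uniq undup_uniq sort_sorted //; apply: leq_total.
Qed.

Lemma index_sorted_letters_leq w a b : a \in w -> b \in w ->
  (index a (sorted_letters w) <= index b (sorted_letters w)) = (a <= b).
Proof.
rewrite -!(mem_sorted_letters w) => a_in b_in; apply/idP/idP.
  exact: (sorted_leq_index leq_trans leqnn (sort_sorted leq_total _)).
apply: contraLR; rewrite -!ltnNge.
exact: (sorted_ltn_index ltn_trans (sorted_letters_ltn w)).
Qed.

Lemma index_sorted_letters_ltn w a b : a \in w -> b \in w ->
  (index a (sorted_letters w) < index b (sorted_letters w)) = (a < b).
Proof. by move=> a_in b_in; rewrite !ltnNge index_sorted_letters_leq. Qed.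

Lemma packed_pack w : packed (pack w).
Proof.
pose n := size (sorted_letters w).
have mem_pack : undup (pack w) =i iota 1 n.
  move=> y; rewrite mem_undup mem_iota add1n ltnS packE; apply/mapP/idP.
    by case=> z z_in ->; rewrite index_mem mem_sorted_letters.
  case: y => // j lt_jn; exists (nth 0 (sorted_letters w) j).
    by rewrite -mem_sorted_letters mem_nth.
  by rewrite index_uniq // sort_uniq undup_uniq.
have sort_pack : sort leq (undup (pack w)) = iota 1 n.
  apply: (irr_sorted_eq ltn_trans ltnn) (iota_ltn_sorted _ _) _.
    by rewrite ltn_sorted_uniq_leq sort_uniq undup_uniq sort_sorted //; apply: leq_total.
  by move=> y; rewrite mem_sort mem_pack.
have size_undup : size (undup (pack w)) = n.
  by rewrite -(size_sort leq) sort_pack size_iota.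
by rewrite /packed sort_pack size_undup.
Qed.

Lemma packed_bounded u : packed u -> all (fun x => 0 < x <= size u) u.
Proof.
move=> /eqP u_packed; apply/allP => x x_in.
have : x \in sort leq (undup u) by rewrite mem_sort mem_undup.
rewrite u_packed mem_iota add1n ltnS => /andP[-> le_x] /=.
exact: leq_trans le_x (size_undup u).
Qed.

Lemma pack_cons_min x v :
  all (fun y => x < y) v -> pack (x :: v) = 1 :: map succn (pack v).
Proof.
move=> x_min; rewrite !packE.
have x_notin : x \notin v by apply/negP => /(allP x_min); rewrite ltnn.
have -> : sorted_letters (x :: v) = x :: sorted_letters v.
  apply: (irr_sorted_eq ltn_trans ltnn); first exact: sorted_letters_ltn.
    rewrite /= path_sortedE ?sorted_letters_ltn ?andbT //; last exact: ltn_trans.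
    by apply/allP => y; rewrite mem_sorted_letters => /(allP x_min).
  by move=> y; rewrite mem_sorted_letters !inE mem_sorted_letters.
rewrite /= eqxx -map_comp; congr (_ :: _); apply/eq_in_map => y y_in /=.
by case: eqP => // eq_xy; rewrite eq_xy y_in in x_notin.
Qed.

Lemma pack_cons_all_gt x v u :
  pack (x :: v) = 1 :: u -> 1 \notin u -> all (fun y => x < y) v.
Proof.
rewrite packE /= => -[idx_x <-]; apply: contraR => /allPn[y y_in].
rewrite -leqNgt => le_yx; apply/mapP; exists y => //; congr _.+1; apply/esym/eqP.
by rewrite -leqn0 -idx_x index_sorted_letters_leq // ?mem_head // inE y_in orbT.
Qed.

Lemma M_cons_shift u x v : 0 \notin u ->
  M (1 :: map succn u) (x :: v) = ((0 < x) && all (fun y => x < y) v) * M u v.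
Proof.
move=> u_pos; rewrite /M inE negb_or (eq_sym 0) -lt0n.
have [x_min | x_not_min] := boolP (all _ v).
  rewrite pack_cons_min // eqseq_cons eqxx (inj_eq (inj_map succn_inj)).
  by case: (0 < x); rewrite /= ?mul1n ?mul0n.
rewrite andbF mul0n; apply/eqP; rewrite eqb0.
apply: contra x_not_min => /andP[_ /eqP pack_xv].
by apply: pack_cons_all_gt pack_xv _; rewrite (mem_map succn_inj).
Qed.

Lemma heap_word_positive p v : heap_word 0 p v -> (size v == size p) && (0 \notin v).
Proof.
case/andP => -> /allP heap_v /=; apply/negP => v0.
have := heap_v (index 0 v); rewrite mem_iota index_mem v0 /heap_at nth_index //.
by case: (nth None p _) => [q|] /(_ isT) //; rewrite ltn0 andbF.
Qed.

Lemma heap_word_pack p w : 0 \notin w -> heap_word 0 p (pack w) = heap_word 0 p w.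
Proof.
move=> w_pos; have size_pack : size (pack w) = size w by rewrite size_map.
have pos_pack j : (0 < nth 0 (pack w) j) = (0 < nth 0 w j).
  have [lt_jw | le_wj] := ltnP j (size w); last by rewrite !nth_default ?size_pack.
  rewrite packE (nth_map 0) // ltn0Sn lt0n; apply/esym.
  by apply: contra w_pos => /eqP <-; apply: mem_nth.
rewrite /heap_word size_pack; congr (_ && _).
apply: eq_in_all => k; rewrite mem_iota /= => lt_kw; rewrite /heap_at.
case: (nth None p k) => [q|]; last exact: pos_pack.
rewrite pos_pack; have [parent_pos | //] := boolP (0 < nth 0 w q.-1).
have lt_qw : q.-1 < size w.
  by rewrite ltnNge; apply: contraL parent_pos => le_wq; rewrite nth_default.
by rewrite packE !(nth_map 0) // ltnS index_sorted_letters_ltn ?mem_nth.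
Qed.

Fixpoint bounded_words (n m : nat) : seq (seq nat) :=
  if n is n'.+1 then [seq x :: w | x <- iota 1 m, w <- bounded_words n' m] else [:: [::]].

Lemma mem_bounded_words n m w :
  (w \in bounded_words n m) = (size w == n) && all (fun x => 0 < x <= m) w.
Proof.
elim: n w => [|n IH] [|x w] //=; first by apply/negP => /allpairsP[[? ?] []].
apply/allpairsP/idP => [[[y w'] /= [y_in w'_in [-> ->]]] | ].
  by move: y_in w'_in; rewrite mem_iota add1n ltnS IH eqSS => -> /andP[-> ->].
rewrite eqSS => /and3P[size_w x_in w_in]; exists (x, w) => /=.
by rewrite mem_iota add1n ltnS x_in IH size_w.
Qed.

Lemma uniq_bounded_words n m : uniq (bounded_words n m).
Proof.
elim: n => [|n IH] //=; apply: allpairs_uniq => //; first exact: iota_uniq.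
by move=> [? ?] [? ?] _ _ /= [-> ->].
Qed.

Lemma indicator_in_WQSym (f : seriesX) (P : pred (seq nat)) n :
  (forall w, f w = P w) ->
  (forall w, P w -> (size w == n) && (0 \notin w)) ->
  (forall w, 0 \notin w -> P (pack w) = P w) ->
  in_WQSym f.
Proof.
move=> fP P_supp P_pack.
exists [seq (u, 1) | u <- [seq u <- bounded_words n n | packed u && P u]]; split.
  by apply/allP => _ /mapP[_ /mapP[u + ->] ->]; rewrite mem_filter => /andP[/andP[]].
move=> w; rewrite fP /lin_comb big_map.
under eq_bigr do rewrite /= mul1n /M andbC.
rewrite (@sum_eq_and _ _ _ (fun=> 0 \notin w)) ?filter_uniq ?uniq_bounded_words //.
rewrite mem_filter mem_bounded_words packed_pack /=; have [w0 | w_pos] := boolP (0 \in w).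
  have /negbTE -> : ~~ P w by apply: contraL w0 => /P_supp /andP[].
  by rewrite [~~ true]/= andbF.
rewrite [~~ false]/= andbT P_pack //; case Pw: (P w) => //=.
have /andP[/eqP size_w _] := P_supp w Pw.
by have := packed_bounded (packed_pack w); rewrite size_map size_w eqxx => ->.
Qed.

Lemma lin_comb_b_comb_nil s : lin_comb (b_comb s) [::] = 0.
Proof. by rewrite /lin_comb big_map big1 // => -[u c] _; rewrite /M /= muln0. Qed.

Lemma lin_comb_b_comb_cons s x v : all packed (unzip1 s) ->
  lin_comb (b_comb s) (x :: v) = ((0 < x) && all (fun y => x < y) v) * lin_comb s v.
Proof.
move=> /allP s_packed; rewrite /lin_comb /b_comb big_map big_distrr /=.
apply: eq_big_seq => -[u c] uc_in /=; rewrite M_cons_shift; first exact: mulnCA.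
apply/negP => /(allP (packed_bounded (s_packed u (map_f _ uc_in)))).
by rewrite ltnn.
Qed.

Lemma heap_word_shift p x v :
  heap_word 0 (None :: map shift_parent p) (x :: v) = (0 < x) && heap_word x p v.
Proof.
rewrite /heap_word /= eqSS size_map.
have -> : iota 1 (size v) = map succn (iota 0 (size v)) by rewrite -(iotaDl 1).
rewrite all_map {1}/heap_at /=.
case: (size v =P size p) => [size_v | _]; last by rewrite !andbF.
have [x_pos | //] := boolP (0 < x) => /=.
apply: eq_in_all => k; rewrite mem_iota add0n => /= lt_kv.
rewrite /heap_at /= (nth_map None) -?size_v //.
by case: (nth None p k) => [q|] /=; rewrite ?x_pos.
Qed.

Lemma heap_word_gt x p v : heap_word x p v -> all (fun y => x < y) v.
Proof.
case/andP => _ /allP heap_v.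
(* Induction on a bound for the label: a non-root label exceeds its parent's. *)
suff gt_x N k : k < size v -> nth 0 v k < N -> x < nth 0 v k.
  by apply/(all_nthP 0) => k lt_kv; apply: (gt_x (nth 0 v k).+1).
elim: N k => // N IH k lt_kv lt_kN.
have := heap_v k; rewrite mem_iota lt_kv /heap_at => /(_ isT).
case: (nth None p k) => // q /andP[parent_pos lt_qk].
have lt_qv : q.-1 < size v.
  by rewrite ltnNge; apply: contraL parent_pos => ?; rewrite nth_default.
exact: ltn_trans (IH _ lt_qv (leq_trans lt_qk lt_kN)) lt_qk.
Qed.

Lemma heap_word_root_bound x p v :
  heap_word x p v = heap_word 0 p v && all (fun y => x < y) v.
Proof.
apply/idP/andP => [heap_x | [/andP[size_v /allP heap_0] /allP x_min]].
  split; last exact: heap_word_gt heap_x.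
  case/andP: heap_x => size_v /allP heap_x; rewrite /heap_word size_v.
  apply/allP => k /heap_x.
  by rewrite /heap_at; case: nth => //; apply: leq_ltn_trans (leq0n x).
apply/andP; split=> //; apply/allP => k k_in.
have := heap_0 k k_in; rewrite /heap_at; case: nth => // _; apply: x_min.
by apply: mem_nth; move: k_in; rewrite mem_iota.
Qed.

Theorem mainTheorem7 (F : pforest) :
  in_WQSym (piS (Sprime (iota_pf F))) /\
  forall s : seq (seq nat * nat),
    all packed (unzip1 s) ->
    piS (Sprime (iota_pf F)) =1 lin_comb s ->
    piS (Sprime (iota_pf [:: Bplus F])) =1 lin_comb (b_comb s).
Proof.
split.
  apply: (@indicator_in_WQSym _ (heap_word 0 (iota_pf F)) (size (iota_pf F))).
  - exact: piS_Sprime.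
  - exact: heap_word_positive.
  - exact: heap_word_pack.
move=> s s_packed piF [|x v]; rewrite iota_Bplus piS_Sprime.
  by rewrite lin_comb_b_comb_nil.
rewrite heap_word_shift heap_word_root_bound lin_comb_b_comb_cons // -piF piS_Sprime.
by case: (heap_word 0 (iota_pf F) v); rewrite /= ?andbF ?muln0 ?muln1.
Qed.
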